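(* For every cubic graph $G$ that contains a perfect matching, $\nu_2(G) \geq \frac{20}{21}\cdot \frac{|V(G)| + 2\cdot \nu_3(G)}{4}$.
   Context: Graphs are finite, without loops, possibly with multiple edges; a graph is cubic if every vertex has degree $3$. For $k\geq 1$, $\nu_k(G)$ is the maximum number of edges of a $k$-edge-colorable subgraph of $G$. *)

(* A finite loopless multigraph is given by a finite vertex
   type V, a finite edge type E and endpoint maps src tgt : E -> V
   (multiple edges = distinct edges with the same endpoints). *)
From mathcomp Require Import all_boot all_order all_algebra.
Set Implicit Arguments. Unset Strict Implicit. Unset Printing Implicit Defensive.

Section Graphs.
Variables (V E : finType) (src tgt : E -> V).

Definition incident (e : E) (v : V) : bool := (src e == v) || (tgt e == v).

Definition loopless : Prop := forall e : E, src e != tgt e.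

Definition deg (v : V) : nat := #|[set e : E | incident e v]|.

Definition cubic : Prop := forall v : V, deg v = 3.

Definition adjacent (e f : E) : bool :=
  (e != f) && [exists v : V, incident e v && incident f v].

Definition perfect_matching (M : {set E}) : Prop :=
  forall v : V, #|[set e in M | incident e v]| = 1.

Definition has_perfect_matching : Prop := exists M : {set E}, perfect_matching M.

Definition k_edge_colorable (k : nat) (F : {set E}) : bool :=
  [exists c : {ffun E -> 'I_k},
     [forall e in F, forall f in F, adjacent e f ==> (c e != c f)]].

Definition nu (k : nat) : nat :=
  \max_(F : {set E} | k_edge_colorable k F) #|F|.

End Graphs.

From mathcomp Require Import all_boot all_order all_algebra.
From mathcomp Require Import zify lra.
Set Implicit Arguments. Unset Strict Implicit. Unset Printing Implicit Defensive.

(* The complement of a perfect matching M of a cubic graph is a 2-factor with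
   |V| edges. A maximal matching N of this 2-factor meets all of its edges,
   and each edge of N meets at most three of them, so |N| >= |V|/3; as M and N
   are disjoint matchings, nu_2 >= |V|/2 + |V|/3 = 5|V|/6. Deleting the
   smallest colour class of a maximum 3-edge-colourable subgraph gives
   2 nu_3 <= 3 nu_2. Hence (|V| + 2 nu_3)/4 <= (6/5 + 3) nu_2 / 4 = 21/20 nu_2. *)

Lemma card_in_pred_sum (T : finType) (A : {set T}) (P : pred T) :
  #|[set x in A | P x]| = \sum_(x in A) (P x : nat).
Proof.
rewrite -sum1_card big_mkcond [RHS]big_mkcond; apply: eq_bigr => x _.
by rewrite inE; case: (x \in A); case: (P x).
Qed.

Section Counting.
Variables (I J : finType).

Lemma double_counting (B : {set I}) (A : {set J}) (R : I -> J -> bool) :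
  \sum_(i in B) #|[set j in A | R i j]| = \sum_(j in A) #|[set i in B | R i j]|.
Proof.
under eq_bigr do rewrite card_in_pred_sum.
by rewrite exchange_big; apply: eq_bigr => j _; rewrite (card_in_pred_sum B (R^~ j)).
Qed.

Lemma card_le_covered (B : {set I}) (A : {set J}) (R : I -> J -> bool) d :
  (forall j, j \in A -> exists2 i, i \in B & R i j) ->
  (forall i, i \in B -> #|[set j in A | R i j]| <= d) ->
  #|A| <= d * #|B|.
Proof.
move=> covered bounded.
have -> : #|A| = \sum_(j in A) 1 by rewrite sum1_card.
apply: (@leq_trans (\sum_(j in A) #|[set i in B | R i j]|)).
  apply: leq_sum => j /covered [i iB Rij]; apply/card_gt0P; exists i.
  by rewrite inE iB.
rewrite -double_counting mulnC -sum_nat_const; exact: leq_sum.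
Qed.

End Counting.

Section Graph.
Variables (V E : finType) (src tgt : E -> V).

Local Notation incident := (incident src tgt).
Local Notation adjacent := (adjacent src tgt).
Local Notation nu := (nu src tgt).

Definition touches (e f : E) : bool := [exists v, incident e v && incident f v].

Definition matching (N : {set E}) : bool :=
  [forall e in N, forall f in N, ~~ adjacent e f].

Definition deg_in (F : {set E}) (v : V) : nat := #|[set e in F | incident e v]|.

Definition proper_coloring k (F : {set E}) (c : {ffun E -> 'I_k}) : bool :=
  [forall e in F, forall f in F, adjacent e f ==> (c e != c f)].

Lemma touchesC e f : touches e f = touches f e.
Proof. by apply/existsP/existsP => -[v /andP [ev fv]]; exists v; rewrite ev fv. Qed.

Lemma adjacentC e f : adjacent e f = adjacent f e.
Proof. by rewrite /adjacent eq_sym; congr (_ && _); exact: touchesC. Qed.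

Lemma touchesE e f :
  touches e f = incident f (src e) || incident f (tgt e).
Proof.
apply/existsP/orP => [[v /andP [/orP [] /eqP <- fv]] | [] fv]; [by left | by right | |].
- by exists (src e); rewrite fv /incident eqxx.
- by exists (tgt e); rewrite fv /incident eqxx orbT.
Qed.

Lemma matchingP (N : {set E}) :
  reflect (forall e f, e \in N -> f \in N -> ~~ adjacent e f) (matching N).
Proof.
apply: (iffP forall_inP) => [h e f eN fN | h e eN].
  exact: (forall_inP (h e eN) f fN).
by apply/forall_inP => f; apply: h.
Qed.

Lemma proper_coloringP k (F : {set E}) (c : {ffun E -> 'I_k}) :
  reflect (forall e f, e \in F -> f \in F -> adjacent e f -> c e != c f)
          (proper_coloring F c).
Proof.
apply: (iffP forall_inP) => [h e f eF fF | h e eF].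
  exact: (implyP (forall_inP (h e eF) f fF)).
by apply/forall_inP => f fF; apply/implyP; apply: h.
Qed.

Lemma leq_nu k (F : {set E}) : k_edge_colorable src tgt k F -> #|F| <= nu k.
Proof. exact: (@leq_bigmax_cond _ _ (fun F : {set E} => #|F|)). Qed.

Lemma nu_attained k :
  exists2 F, k_edge_colorable src tgt k.+1 F & #|F| = nu k.+1.
Proof.
have col0 : k_edge_colorable src tgt k.+1 set0.
  by apply/existsP; exists [ffun=> ord0]; apply/forall_inP => e; rewrite inE.
have nonempty : 0 < #|k_edge_colorable src tgt k.+1| by apply/card_gt0P; exists set0.
have [F colF maxF] := eq_bigmax_cond (fun F : {set E} => #|F|) nonempty.
by exists F.
Qed.

Lemma proper_coloring_drop k (F : {set E}) (c : {ffun E -> 'I_k.+2}) i :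
  proper_coloring F c ->
  k_edge_colorable src tgt k.+1 [set e in F | c e != i].
Proof.
move=> /proper_coloringP cP; apply/existsP.
exists [ffun e => odflt ord0 (unlift i (c e))].
apply/proper_coloringP => e f; rewrite !inE !ffunE => /andP [eF ei] /andP [fF fi] ef.
rewrite eq_sym in ei; rewrite eq_sym in fi.
have [ce Ece uce] := unlift_some ei; have [cf Ecf ucf] := unlift_some fi.
rewrite uce ucf /=; apply: contra (cP e f eF fF ef) => /eqP ce_cf.
by rewrite Ece Ecf ce_cf.
Qed.

Lemma nu_succ_le k : k.+1 * nu k.+2 <= k.+2 * nu k.+1.
Proof.
have [F /existsP [c col] <-] := nu_attained k.+1.
have drop_le i : #|[set e in F | c e != i]| <= nu k.+1.
  exact/leq_nu/proper_coloring_drop.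
have count_drops : \sum_(i in [set: 'I_k.+2]) #|[set e in F | c e != i]| = k.+1 * #|F|.
  rewrite double_counting mulnC -sum_nat_const; apply: eq_bigr => e _.
  transitivity #|[set~ c e]|; last by rewrite cardsC1 card_ord.
  by apply: eq_card => i; rewrite !inE eq_sym.
rewrite -count_drops (@leq_trans (\sum_(i in [set: 'I_k.+2]) nu k.+1)) ?leq_sum //.
by rewrite sum_nat_const cardsT card_ord mulnC.
Qed.

Hypothesis src_neq_tgt : loopless src tgt.

Lemma card_endpoints e : #|[set v | incident e v]| = 2.
Proof.
have -> : [set v | incident e v] = [set src e; tgt e].
  by apply/setP => v; rewrite !inE /incident ![_ == v]eq_sym.
by rewrite cards2 src_neq_tgt.
Qed.

Lemma sum_deg_in (F : {set E}) : \sum_v deg_in F v = 2 * #|F|.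
Proof.
rewrite (eq_bigl (mem [set: V])) => [|v]; last by rewrite !inE.
rewrite (double_counting _ _ (fun v e => incident e v)) mulnC -sum_nat_const.
by apply: eq_bigr => e _; rewrite -(card_endpoints e); apply: eq_card => v; rewrite !inE.
Qed.

Lemma perfect_matching_card (M : {set E}) :
  perfect_matching src tgt M -> 2 * #|M| = #|V|.
Proof.
by move=> pmM; rewrite -sum_deg_in -sum1_card; apply: eq_bigr => v _; apply: pmM.
Qed.

Lemma deg_in_setT v : deg_in [set: E] v = deg src tgt v.
Proof. by apply: eq_card => e; rewrite !inE. Qed.

Lemma deg_in_setC (F : {set E}) v : deg_in F v + deg_in (~: F) v = deg src tgt v.
Proof.
rewrite -deg_in_setT /deg_in -(cardsID F [set e in [set: E] | incident e v]).
by congr (_ + _); apply: eq_card => e; rewrite !inE andbC.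
Qed.

Lemma perfect_matching_matching (M : {set E}) :
  perfect_matching src tgt M -> matching M.
Proof.
move=> pmM; apply/matchingP => e f eM fM; apply/negP => /andP [ef /existsP [v /andP [ev fv]]].
have /card_le1_eqP one_at_v : #|[set e in M | incident e v]| <= 1 by rewrite pmM.
by case/eqP: ef; apply: one_at_v; rewrite inE ?eM ?fM ?ev ?fv.
Qed.

Lemma matching_setU_colorable (M N : {set E}) :
  matching M -> matching N -> k_edge_colorable src tgt 2 (M :|: N).
Proof.
move=> /matchingP matchM /matchingP matchN; apply/existsP.
exists [ffun e => if e \in M then ord0 else ord_max].
apply/proper_coloringP => e f; rewrite !inE !ffunE.
case eM: (e \in M); case fM: (f \in M) => //= eN fN ef.
- by case/negP: (matchM e f eM fM).
- by case/negP: (matchN e f eN fN).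
Qed.

Lemma exists_dominating_matching (F : {set E}) :
  exists N : {set E}, [/\ N \subset F, matching N &
    forall f, f \in F -> exists2 e, e \in N & touches e f].
Proof.
pose matching_in (N : {set E}) := (N \subset F) && matching N.
have matching_in0 : matching_in set0.
  by rewrite /matching_in sub0set; apply/matchingP => e f; rewrite inE.
case: (arg_maxnP (fun N : {set E} => #|N|) matching_in0).
move=> N /andP [NF matchN] maxN; exists N; split=> // f fF.
have [/exists_inP [e eN tef] | untouched] := boolP [exists e in N, touches e f].
  by exists e.
have fN : f \notin N.
  by apply: contra untouched => fN; apply/exists_inP; exists f; rewrite // touchesE /incident eqxx.
suff /maxN : matching_in (f |: N) by rewrite cardsU1 fN; lia.
rewrite /matching_in subUset sub1set fF NF /=; apply/matchingP => e g.
have far h : h \in N -> ~~ adjacent f h.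
  move=> hN; apply: contra untouched => /andP [_ tfh]; apply/exists_inP.
  by exists h; rewrite // touchesC.
rewrite !inE => /orP [/eqP -> | eN] /orP [/eqP -> | gN].
- by rewrite /adjacent eqxx.
- exact: far.
- by rewrite adjacentC far.
- exact: (matchingP _ matchN).
Qed.

Lemma card_touches (F : {set E}) e : e \in F ->
  #|[set f in F | touches e f]| < deg_in F (src e) + deg_in F (tgt e).
Proof.
move=> eF; rewrite /deg_in -cardsUI.
have -> : [set f in F | touches e f] =
    [set f in F | incident f (src e)] :|: [set f in F | incident f (tgt e)].
  by apply/setP => f; rewrite !inE touchesE andb_orr.
rewrite -[X in X < _]addn0 ltn_add2l; apply/card_gt0P; exists e.
by rewrite !inE eF /incident !eqxx orbT.
Qed.

Hypothesis cubicG : cubic src tgt.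

Lemma cubic_card_edges : 2 * #|E| = 3 * #|V|.
Proof.
rewrite -(cardsT E) -sum_deg_in mulnC -sum_nat_const.
by apply: eq_bigr => v _; rewrite deg_in_setT cubicG.
Qed.

Lemma cubic_nu2_ge : has_perfect_matching src tgt -> 5 * #|V| <= 6 * nu 2.
Proof.
move=> [M pmM].
have degC v : deg_in (~: M) v = 2.
  by have := deg_in_setC M v; rewrite [deg_in M v]pmM cubicG => -[].
have cardC : #|~: M| = #|V|.
  by have := cardsC M; have := perfect_matching_card pmM; have := cubic_card_edges; lia.
have [N [NC matchN dominated]] := exists_dominating_matching (~: M).
have cardN : #|~: M| <= 3 * #|N|.
  apply: card_le_covered dominated _ => e /(subsetP NC) eC.
  by have := card_touches eC; rewrite !degC.
have cardMN : #|M :|: N| = #|M| + #|N|.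
  have disjMN : [disjoint N & M] by rewrite -[M]setCK -subsets_disjoint.
  by rewrite cardsU disjoint_setI0 1?disjoint_sym // cards0 subn0.
have := leq_nu (matching_setU_colorable (perfect_matching_matching pmM) matchN).
by have := perfect_matching_card pmM; rewrite cardMN; lia.
Qed.

End Graph.

Import GRing.Theory Num.Theory.
Local Open Scope ring_scope.

Theorem theorem5 (V E : finType) (src tgt : E -> V) :
  loopless src tgt -> cubic src tgt -> has_perfect_matching src tgt ->
  (nu src tgt 2)%:R >=
    (20%:R / 21%:R : rat) * (((#|V| + 2 * nu src tgt 3)%N)%:R / 4%:R).
Proof.
move=> loopless_G cubic_G pm_G.
have nu2_V := cubic_nu2_ge loopless_G cubic_G pm_G.
have nu2_nu3 := nu_succ_le src tgt 1.
move: (nu src tgt 2) (nu src tgt 3) #|V| nu2_V nu2_nu3 => nu2 nu3 n.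
rewrite -!(ler_nat rat) !natrM natrD natrM => nu2_n nu2_nu3.
lra.
Qed.
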